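(* The category $\mathbf{ConvexRel}$ is a dagger compact closed category, where: (i) the symmetric monoidal structure has monoidal product $(A,\alpha)\otimes(B,\beta)$ (the convex algebra on $A\times B$ with mixing $\sum_i p_i|(a_i,b_i)\rangle\mapsto(\sum_i p_i a_i,\sum_i p_i b_i)$), acting on morphisms by the product of relations, and monoidal unit $I$ (the one-point set $\{*\}$ with its unique convex algebra structure); (ii) the dagger of a morphism $R:(A,\alpha)\to(B,\beta)$ is its relational converse $R^{\dagger}=\{(b,a)\mid (a,b)\in R\}:(B,\beta)\to(A,\alpha)$; (iii) for each object $(A,\alpha)$, the cap $\eta_{(A,\alpha)}:I\to(A,\alpha)\otimes(A,\alpha)$ is the relation $\{( *,(a,a))\mid a\in A\}$ and the cup $\epsilon_{(A,\alpha)}:(A,\alpha)\otimes(A,\alpha)\to I$ is its converse $\{((a,a),* )\mid a\in A\}$. Moreover, every object $(A,\alpha)$ carries a commutative special dagger Frobenius structure whose comultiplication (copy) is the relation $\{(a,(a,a))\mid a\in A\}:(A,\alpha)\to(A,\alpha)\otimes(A,\alpha)$ and whose counit (delete) is the relation $\{(a,* )\mid a\in A\}:(A,\alpha)\to I$, with multiplication and unit given by the converses (daggers) of these.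
   Context: For a set $X$, $D(X)$ denotes the set of finite formal convex sums $\sum_i p_i|x_i\rangle$ of elements $x_i\in X$, with $p_i\in\mathbb{R}^{\ge 0}$ and $\sum_i p_i=1$ (equivalently, finitely supported probability distributions on $X$). A convex algebra is a pair $(A,\alpha)$ with $A$ a set and $\alpha:D(A)\to A$ a function satisfying $\alpha(|a\rangle)=a$ for all $a\in A$ and $\alpha(\sum_{i,j}p_iq_{i,j}|a_{i,j}\rangle)=\alpha(\sum_i p_i|\alpha(\sum_j q_{i,j}|a_{i,j}\rangle)\rangle)$ for all finite families (where $\sum_i p_i=1$ and $\sum_j q_{i,j}=1$ for each $i$). One abbreviates $\sum_i p_i a_i:=\alpha(\sum_i p_i|a_i\rangle)$. A convex relation $(A,\alpha)\to(B,\beta)$ is a binary relation $R\subseteq A\times B$ such that whenever $R(a_i,b_i)$ holds for all $i$ in a finite family and $\sum_i p_i|\cdot\rangle$ is any formal convex combination, then $R(\sum_i p_i a_i,\sum_i p_i b_i)$ holds. The category $\mathbf{ConvexRel}$ has convex algebras as objects and convex relations as morphisms, with composition and identities as for ordinary binary relations. A Frobenius structure on an object is a comonoid (comultiplication, counit) and monoid (multiplication, unit) satisfying the Frobenius law; it is dagger if the monoid is the dagger of the comonoid, special if multiplication after comultiplication is the identity, and commutative if the monoid and comonoid are (co)commutative with respect to the symmetry. *)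

From HB Require Import structures.
From mathcomp Require Import all_boot all_order all_algebra.
From mathcomp Require Import boolp finmap.
From mathcomp Require Import Rstruct.
From Stdlib Require Import Rdefinitions.

Set Implicit Arguments.
Unset Strict Implicit.
Unset Printing Implicit Defensive.
Import Order.TTheory GRing.Theory Num.Theory.
Local Open Scope ring_scope.
Local Open Scope fset_scope.

Notation Real := Rdefinitions.R.

Section Dist.
Variable T : Type.
Local Notation cT := {classic T}.

Definition is_dist (f : {fsfun cT -> Real with 0}) : bool :=
  [forall x : finsupp f, 0 <= f (val x)] && (\sum_(x <- finsupp f) f x == 1).

Definition dist := {f : {fsfun cT -> Real with 0} | is_dist f}.

Definition is_weights (I : finType) (p : I -> Real) : Prop :=
  (forall i, 0 <= p i) /\ \sum_i p i = 1.

Definition fsum_fsfun (I : finType) (p : I -> Real) (a : I -> T)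
  : {fsfun cT -> Real with 0} :=
  [fsfun y in [fset (a i : cT) | i : I] => \sum_(i | (a i : cT) == y) p i | 0].

Lemma fsum_fsfunE (I : finType) (p : I -> Real) (a : I -> T) (y : cT) :
  fsum_fsfun p a y = \sum_(i | (a i : cT) == y) p i.
Proof.
rewrite /fsum_fsfun fsfun_fun; case: ifP => // yNS.
rewrite big1 // => i /eqP ai; move: yNS; rewrite -ai.
by move/negbT/negP; apply: absurd; apply/imfsetP; exists i.
Qed.

Lemma fsum_is_dist (I : finType) (p : I -> Real) (Hp : is_weights p)
  (a : I -> T) : is_dist (fsum_fsfun p a).
Proof.
case: Hp => p0 p1; apply/andP; split.
  by apply/forallP => x; rewrite fsum_fsfunE sumr_ge0.
set S := [fset (a i : cT) | i : I].
have sub : finsupp (fsum_fsfun p a) `<=` S.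
  apply/fsubsetP => x; rewrite mem_finsupp fsum_fsfunE.
  apply: contraR => xS; rewrite big1 // => i /eqP ai.
  by move: xS; rewrite -ai; case/negP; apply/imfsetP; exists i.
have -> : \sum_(x <- finsupp (fsum_fsfun p a)) fsum_fsfun p a x
          = \sum_(x <- S) fsum_fsfun p a x.
  apply: big_fset_incl => // x _.
  by rewrite mem_finsupp negbK => /eqP.
rewrite (eq_bigr _ (fun x _ => fsum_fsfunE p a x)).
rewrite big_seq_fsetE /=; under eq_bigr do rewrite big_mkcond.
rewrite exchange_big /= -p1; apply/eqP; apply: eq_bigr => i _.
rewrite -big_mkcond /=.
have Hin : (a i : cT) \in S by apply/imfsetP; exists i.
by rewrite (big_pred1 [` Hin]).
Qed.

(** the formal convex sum  \sum_i p_i |a_i>  of a finite family *)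
Definition fsum (I : finType) (p : I -> Real) (Hp : is_weights p) (a : I -> T)
  : dist := exist _ (fsum_fsfun p a) (fsum_is_dist Hp a).

Lemma weights1 : is_weights (fun _ : unit => 1).
Proof. split; first by move=> _; exact: ler01. by rewrite big_const card_unit /= addr0. Qed.

Definition dirac (a : T) : dist := fsum weights1 (fun _ : unit => a).

Lemma weights_flatten (I : finType) (J : I -> finType) (p : I -> Real)
  (q : forall i, J i -> Real) (Hp : is_weights p)
  (Hq : forall i, is_weights (q i)) :
  is_weights (fun k : {i : I & J i} => p (tag k) * q (tag k) (tagged k)).
Proof.
case: Hp => p0 p1; split.
  by move=> [i j]; rewrite mulr_ge0 //; case: (Hq i).
rewrite -(@sig_big_dep _ _ _ I J xpredT (fun _ _ => true) (fun i j => p i * q i j)) /=.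
rewrite -p1; apply: eq_bigr => i _; rewrite -mulr_sumr.
by case: (Hq i) => _ ->; rewrite mulr1.
Qed.

(** any distribution d is the formal sum over its support of d(x)|x> *)
Lemma dist_weights (d : dist) :
  is_weights (fun k : finsupp (val d) => val d (val k)).
Proof.
case: d => f /= /andP [/forallP f0 /eqP f1]; split => // .
by rewrite -f1 big_seq_fsetE.
Qed.
End Dist.

Definition conv_alg (A : Type) (alpha : dist A -> A) : Prop :=
  (forall a : A, alpha (dirac a) = a) /\
  (forall (I : finType) (J : I -> finType) (p : I -> Real)
     (q : forall i, J i -> Real) (Hp : is_weights p)
     (Hq : forall i, is_weights (q i)) (a : forall i, J i -> A),
     alpha (fsum (weights_flatten Hp Hq) (fun k => a (tag k) (tagged k)))
     = alpha (fsum Hp (fun i => alpha (fsum (Hq i) (a i))))).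

Record calg := CAlg { car :> Type; act : dist car -> car }.

Definition is_calg (A : calg) : Prop := conv_alg (@act A).

Definition rel (A B : calg) := car A -> car B -> Prop.

Definition convex_rel (A B : calg) (Rl : rel A B) : Prop :=
  forall (I : finType) (p : I -> Real) (Hp : is_weights p)
         (a : I -> car A) (b : I -> car B),
    (forall i, Rl (a i) (b i)) ->
    Rl (act (fsum Hp a)) (act (fsum Hp b)).

Definition req (A B : calg) (Rl S : rel A B) : Prop :=
  forall a b, Rl a b <-> S a b.

(** identity and (diagrammatic) composition: [rcomp Rl S] is "first Rl, then S" *)
Definition rid (A : calg) : rel A A := fun a a' => a = a'.
Definition rcomp (A B C : calg) (Rl : rel A B) (S : rel B C) : rel A C :=
  fun a c => exists b, Rl a b /\ S b c.

Definition rconv (A B : calg) (Rl : rel A B) : rel B A := fun b a => Rl a b.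

Definition cI : calg := @CAlg unit (fun _ => tt).

(** monoidal product of objects:
    sum_i p_i |(a_i,b_i)>  |->  (sum_i p_i a_i, sum_i p_i b_i),
    where the distribution d on A x B is written canonically as the formal sum
    over its support  sum_{x in supp d} d(x) |x>. *)
Definition prod_act (A B : calg) (d : dist (car A * car B)) : car A * car B :=
  (act (fsum (dist_weights d) (fun k => (val k : car A * car B).1)),
   act (fsum (dist_weights d) (fun k => (val k : car A * car B).2))).

Definition ctens (A B : calg) : calg := @CAlg (car A * car B) (@prod_act A B).

Definition rtens (A B C D : calg) (Rl : rel A B) (S : rel C D)
  : rel (ctens A C) (ctens B D) :=
  fun x y => Rl x.1 y.1 /\ S x.2 y.2.

Definition rassoc (A B C : calg) : rel (ctens (ctens A B) C) (ctens A (ctens B C)) :=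
  fun x y => y = (x.1.1, (x.1.2, x.2)).
Definition rlunit (A : calg) : rel (ctens cI A) A := fun x y => y = x.2.
Definition rrunit (A : calg) : rel (ctens A cI) A := fun x y => y = x.1.
Definition rsym (A B : calg) : rel (ctens A B) (ctens B A) :=
  fun x y => y = (x.2, x.1).

Definition rcap (A : calg) : rel cI (ctens A A) := fun _ y => y.1 = y.2.
Definition rcup (A : calg) : rel (ctens A A) cI := rconv (@rcap A).

Definition rcopy (A : calg) : rel A (ctens A A) := fun a y => y = (a, a).
Definition rdelete (A : calg) : rel A cI := fun _ _ => True.
Definition rmerge (A : calg) : rel (ctens A A) A := rconv (@rcopy A).
Definition rnew (A : calg) : rel cI A := rconv (@rdelete A).

Definition riso (A B : calg) (Rl : rel A B) (S : rel B A) : Prop :=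
  req (rcomp Rl S) (@rid A) /\ req (rcomp S Rl) (@rid B).

Definition unitary (A B : calg) (Rl : rel A B) : Prop := riso Rl (rconv Rl).

Definition ConvexRel_category : Prop :=
  (forall A : calg, is_calg A -> convex_rel (@rid A)) /\
  (forall (A B C : calg) (Rl : rel A B) (S : rel B C),
     is_calg A -> is_calg B -> is_calg C ->
     convex_rel Rl -> convex_rel S -> convex_rel (rcomp Rl S)) /\
  (forall (A B : calg) (Rl : rel A B), is_calg A -> is_calg B -> convex_rel Rl ->
     req (rcomp (@rid A) Rl) Rl /\ req (rcomp Rl (@rid B)) Rl) /\
  (forall (A B C D : calg) (Rl : rel A B) (S : rel B C) (T : rel C D),
     is_calg A -> is_calg B -> is_calg C -> is_calg D ->
     convex_rel Rl -> convex_rel S -> convex_rel T ->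
     req (rcomp (rcomp Rl S) T) (rcomp Rl (rcomp S T))).

Definition ConvexRel_symmetric_monoidal : Prop :=
  is_calg cI /\
  (forall A B : calg, is_calg A -> is_calg B -> is_calg (ctens A B)) /\
  (forall (A B C D : calg) (Rl : rel A B) (S : rel C D),
     is_calg A -> is_calg B -> is_calg C -> is_calg D ->
     convex_rel Rl -> convex_rel S -> convex_rel (rtens Rl S)) /\
  (forall A B : calg, is_calg A -> is_calg B ->
     req (rtens (@rid A) (@rid B)) (@rid (ctens A B))) /\
  (forall (A1 B1 C1 A2 B2 C2 : calg) (R1 : rel A1 B1) (S1 : rel B1 C1)
          (R2 : rel A2 B2) (S2 : rel B2 C2),
     is_calg A1 -> is_calg B1 -> is_calg C1 ->
     is_calg A2 -> is_calg B2 -> is_calg C2 ->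
     convex_rel R1 -> convex_rel S1 -> convex_rel R2 -> convex_rel S2 ->
     req (rtens (rcomp R1 S1) (rcomp R2 S2)) (rcomp (rtens R1 R2) (rtens S1 S2))) /\
  (forall A B C : calg, is_calg A -> is_calg B -> is_calg C ->
     convex_rel (@rassoc A B C) /\ riso (@rassoc A B C) (rconv (@rassoc A B C))) /\
  (forall A : calg, is_calg A ->
     convex_rel (@rlunit A) /\ riso (@rlunit A) (rconv (@rlunit A)) /\
     convex_rel (@rrunit A) /\ riso (@rrunit A) (rconv (@rrunit A))) /\
  (forall A B : calg, is_calg A -> is_calg B ->
     convex_rel (@rsym A B) /\ riso (@rsym A B) (@rsym B A)) /\
  (forall (A A' B B' C C' : calg) (Rl : rel A A') (S : rel B B') (T : rel C C'),
     is_calg A -> is_calg A' -> is_calg B -> is_calg B' -> is_calg C -> is_calg C' ->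
     convex_rel Rl -> convex_rel S -> convex_rel T ->
     req (rcomp (rtens (rtens Rl S) T) (@rassoc A' B' C'))
         (rcomp (@rassoc A B C) (rtens Rl (rtens S T)))) /\
  (forall (A A' : calg) (Rl : rel A A'),
     is_calg A -> is_calg A' -> convex_rel Rl ->
     req (rcomp (rtens (@rid cI) Rl) (@rlunit A')) (rcomp (@rlunit A) Rl) /\
     req (rcomp (rtens Rl (@rid cI)) (@rrunit A')) (rcomp (@rrunit A) Rl)) /\
  (forall (A A' B B' : calg) (Rl : rel A A') (S : rel B B'),
     is_calg A -> is_calg A' -> is_calg B -> is_calg B' ->
     convex_rel Rl -> convex_rel S ->
     req (rcomp (rtens Rl S) (@rsym A' B')) (rcomp (@rsym A B) (rtens S Rl))) /\
  (forall A B C D : calg, is_calg A -> is_calg B -> is_calg C -> is_calg D ->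
     req (rcomp (@rassoc (ctens A B) C D) (@rassoc A B (ctens C D)))
         (rcomp (rcomp (rtens (@rassoc A B C) (@rid D)) (@rassoc A (ctens B C) D))
                (rtens (@rid A) (@rassoc B C D)))) /\
  (forall A B : calg, is_calg A -> is_calg B ->
     req (rcomp (@rassoc A cI B) (rtens (@rid A) (@rlunit B)))
         (rtens (@rrunit A) (@rid B))) /\
  (forall A B C : calg, is_calg A -> is_calg B -> is_calg C ->
     req (rcomp (rcomp (@rassoc A B C) (@rsym A (ctens B C))) (@rassoc B C A))
         (rcomp (rcomp (rtens (@rsym A B) (@rid C)) (@rassoc B A C))
                (rtens (@rid B) (@rsym A C)))) /\
  (forall A B : calg, is_calg A -> is_calg B ->
     req (rcomp (@rsym A B) (@rsym B A)) (@rid (ctens A B))).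

Definition ConvexRel_dagger_symmetric_monoidal : Prop :=
  (forall (A B : calg) (Rl : rel A B), is_calg A -> is_calg B ->
     convex_rel Rl -> convex_rel (rconv Rl)) /\
  (forall A : calg, is_calg A -> req (rconv (@rid A)) (@rid A)) /\
  (forall (A B C : calg) (Rl : rel A B) (S : rel B C),
     is_calg A -> is_calg B -> is_calg C -> convex_rel Rl -> convex_rel S ->
     req (rconv (rcomp Rl S)) (rcomp (rconv S) (rconv Rl))) /\
  (forall (A B : calg) (Rl : rel A B), is_calg A -> is_calg B -> convex_rel Rl ->
     req (rconv (rconv Rl)) Rl) /\
  (forall (A B C D : calg) (Rl : rel A B) (S : rel C D),
     is_calg A -> is_calg B -> is_calg C -> is_calg D ->
     convex_rel Rl -> convex_rel S ->
     req (rconv (rtens Rl S)) (rtens (rconv Rl) (rconv S))) /\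
  (forall A B C : calg, is_calg A -> is_calg B -> is_calg C ->
     unitary (@rassoc A B C)) /\
  (forall A : calg, is_calg A -> unitary (@rlunit A) /\ unitary (@rrunit A)) /\
  (forall A B : calg, is_calg A -> is_calg B -> unitary (@rsym A B)).

Definition ConvexRel_dagger_compact_closed : Prop :=
  ConvexRel_category /\ ConvexRel_symmetric_monoidal /\
  ConvexRel_dagger_symmetric_monoidal /\
  (forall A : calg, is_calg A ->
     convex_rel (@rcap A) /\ convex_rel (@rcup A) /\
     req (@rcup A) (rconv (@rcap A)) /\
     req (rcomp (rconv (@rlunit A))
          (rcomp (rtens (@rcap A) (@rid A))
          (rcomp (@rassoc A A A)
          (rcomp (rtens (@rid A) (@rcup A)) (@rrunit A))))) (@rid A) /\
     req (rcomp (rconv (@rrunit A))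
          (rcomp (rtens (@rid A) (@rcap A))
          (rcomp (rconv (@rassoc A A A))
          (rcomp (rtens (@rcup A) (@rid A)) (@rlunit A))))) (@rid A) /\
     req (rcomp (@rcap A) (@rsym A A)) (@rcap A)).

Definition ConvexRel_Frobenius : Prop :=
  forall A : calg, is_calg A ->
    let d := @rcopy A in let e := @rdelete A in
    let m := @rmerge A in let u := @rnew A in
    convex_rel d /\ convex_rel e /\ convex_rel m /\ convex_rel u /\
    req m (rconv d) /\ req u (rconv e) /\
    req (rcomp d (rcomp (rtens d (@rid A)) (@rassoc A A A)))
        (rcomp d (rtens (@rid A) d)) /\
    req (rcomp d (rcomp (rtens e (@rid A)) (@rlunit A))) (@rid A) /\
    req (rcomp d (rcomp (rtens (@rid A) e) (@rrunit A))) (@rid A) /\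
    req (rcomp (rtens m (@rid A)) m)
        (rcomp (@rassoc A A A) (rcomp (rtens (@rid A) m) m)) /\
    req (rcomp (rconv (@rlunit A)) (rcomp (rtens u (@rid A)) m)) (@rid A) /\
    req (rcomp (rconv (@rrunit A)) (rcomp (rtens (@rid A) u) m)) (@rid A) /\
    req (rcomp d (@rsym A A)) d /\
    req (rcomp (@rsym A A) m) m /\
    req (rcomp (rtens d (@rid A)) (rcomp (@rassoc A A A) (rtens (@rid A) m)))
        (rcomp m d) /\
    req (rcomp (rtens (@rid A) d) (rcomp (rconv (@rassoc A A A)) (rtens m (@rid A))))
        (rcomp m d) /\
    req (rcomp d m) (@rid A).

(* Every equation demanded of a dagger compact category with commutative
   special dagger Frobenius structures already holds in the category of sets
   and relations, so the substance is that all objects involved are convex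
   algebras and all morphisms involved are convex relations.  The product
   algebra mixes componentwise, hence projections, pairings and everything
   built from them (associator, unitors, symmetry, copying) are affine maps,
   and graphs of affine maps are convex.  Convex relations are closed under
   composition (mix the chosen intermediate points), converse and products;
   the cap is the diagonal, which is closed under mixing, and deletion is
   total into the one-point algebra. *)

From Pilot Require Import Defs.
From mathcomp Require Import all_boot all_algebra.
From mathcomp Require Import boolp finmap Rstruct.
Set Implicit Arguments.
Unset Strict Implicit.
Unset Printing Implicit Defensive.
Import GRing.Theory.
Local Open Scope ring_scope.
Local Open Scope fset_scope.

Lemma dist_eq (T : Type) (d1 d2 : dist T) :
  (forall x, val d1 x = val d2 x) -> d1 = d2.
Proof. by move=> eq_d; apply/val_inj/fsfunP. Qed.

Section FormalSums.
Variable T : Type.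
Local Notation cT := {classic T}.

Lemma sum_fsum_fsfun (I : finType) (p : I -> Real) (a : I -> T) (F : T -> Real) :
  \sum_(x <- finsupp (fsum_fsfun p a)) fsum_fsfun p a x * F x
  = \sum_i p i * F (a i).
Proof.
set S := [fset (a i : cT) | i : I].
have aS i : (a i : cT) \in S by apply/imfsetP; exists i.
have supp_sub : finsupp (fsum_fsfun p a) `<=` S.
  apply/fsubsetP => x; rewrite mem_finsupp fsum_fsfunE.
  apply: contraR => xS; rewrite big1 // => i /eqP ai.
  by move: xS; rewrite -ai aS.
rewrite (big_fset_incl _ supp_sub); last first.
  by move=> x _; rewrite mem_finsupp negbK => /eqP ->; rewrite mul0r.
rewrite big_seq_fsetE /=.
under eq_bigr do rewrite fsum_fsfunE mulr_suml big_mkcond.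
rewrite exchange_big /=; apply: eq_bigr => i _.
rewrite (bigD1 [` aS i]) //= eqxx big1 ?addr0 // => x xi.
by case: eqP => // ai; case/eqP: xi; apply: val_inj; rewrite /= ai.
Qed.

Lemma fsum_support_map (U : Type) (I : finType) (p : I -> Real)
  (Hp : is_weights p) (a : I -> T) (g : T -> U) :
  fsum (dist_weights (fsum Hp a)) (fun k => g (val k)) = fsum Hp (g \o a).
Proof.
apply: dist_eq => y /=; rewrite !fsum_fsfunE.
rewrite big_mkcond /= -(big_seq_fsetE _ _ xpredT
  (fun x : cT => if (g x : {classic U}) == y then fsum_fsfun p a x else 0)) /=.
under eq_bigr do rewrite -mulrb -mulr_natr.
rewrite (sum_fsum_fsfun p a (fun x => ((g x : {classic U}) == y)%:R)).
rewrite [RHS]big_mkcond /=.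
by apply: eq_bigr => i _; rewrite mulr_natr mulrb.
Qed.

End FormalSums.

Lemma act_ctens (A B : calg) (I : finType) (p : I -> Real) (Hp : is_weights p)
  (x : I -> car A * car B) :
  @act (ctens A B) (fsum Hp x) =
  (act (fsum Hp (fun i => (x i).1)), act (fsum Hp (fun i => (x i).2))).
Proof. by rewrite /= /prod_act !fsum_support_map. Qed.

Lemma is_calg_cI : is_calg cI.
Proof. by split => [[]|]. Qed.

Lemma is_calg_ctens (A B : calg) : is_calg A -> is_calg B -> is_calg (ctens A B).
Proof.
move=> [A_unit A_flat] [B_unit B_flat]; split.
  by move=> [a b]; rewrite act_ctens; exact: (congr2 pair (A_unit a) (B_unit b)).
move=> I J p q Hp Hq x; rewrite !act_ctens /=.
rewrite (A_flat _ _ _ _ Hp Hq (fun i j => (x i j).1)).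
rewrite (B_flat _ _ _ _ Hp Hq (fun i j => (x i j).2)).
by congr (act (fsum Hp _), act (fsum Hp _)); apply: funext => i;
  rewrite fsum_support_map.
Qed.

Definition affine (A B : calg) (f : A -> B) : Prop :=
  forall (I : finType) (p : I -> Real) (Hp : is_weights p) (a : I -> A),
    f (act (fsum Hp a)) = act (fsum Hp (f \o a)).

Section AffineMaps.
Variables A B C : calg.

Lemma affine_id : affine (@id A).
Proof. by []. Qed.

Lemma affine_comp (f : A -> B) (g : B -> C) :
  affine f -> affine g -> affine (g \o f).
Proof. by move=> f_aff g_aff I p Hp a; rewrite /= f_aff g_aff. Qed.

Lemma affine_fst : @affine (ctens A B) A fst.
Proof. by move=> I p Hp a; rewrite act_ctens. Qed.

Lemma affine_snd : @affine (ctens A B) B snd.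
Proof. by move=> I p Hp a; rewrite act_ctens. Qed.

Lemma affine_pair (f : C -> A) (g : C -> B) :
  affine f -> affine g -> @affine C (ctens A B) (fun c => (f c, g c)).
Proof. by move=> f_aff g_aff I p Hp a; rewrite act_ctens f_aff g_aff. Qed.

Lemma convex_rel_graph (f : A -> B) :
  affine f -> @convex_rel A B (fun a b => b = f a).
Proof. by move=> f_aff I p Hp a b /funext ->; rewrite f_aff. Qed.

End AffineMaps.

Lemma convex_rid (A : calg) : convex_rel (@rid A).
Proof. by move=> I p Hp a b /funext ->. Qed.

Lemma convex_rcomp (A B C : calg) (Rl : Defs.rel A B) (S : Defs.rel B C) :
  convex_rel Rl -> convex_rel S -> convex_rel (rcomp Rl S).
Proof.
move=> Rl_cvx S_cvx I p Hp a c /choice [b abc].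
exists (act (fsum Hp b)); split.
  by apply: Rl_cvx => i; case: (abc i).
by apply: S_cvx => i; case: (abc i).
Qed.

Lemma convex_rconv (A B : calg) (Rl : Defs.rel A B) :
  convex_rel Rl -> convex_rel (rconv Rl).
Proof. by move=> Rl_cvx I p Hp a b; apply: Rl_cvx. Qed.

Lemma convex_rtens (A B C D : calg) (Rl : Defs.rel A B) (S : Defs.rel C D) :
  convex_rel Rl -> convex_rel S -> convex_rel (rtens Rl S).
Proof.
move=> Rl_cvx S_cvx I p Hp a b ab; rewrite /rtens !act_ctens; split.
  by apply: Rl_cvx => i; case: (ab i).
by apply: S_cvx => i; case: (ab i).
Qed.

Lemma convex_rassoc (A B C : calg) : convex_rel (@rassoc A B C).
Proof.
apply: convex_rel_graph; apply: affine_pair.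
  exact: affine_comp (@affine_fst (ctens A B) C) (@affine_fst A B).
apply: affine_pair; last exact: affine_snd.
exact: affine_comp (@affine_fst (ctens A B) C) (@affine_snd A B).
Qed.

Lemma convex_rlunit (A : calg) : convex_rel (@rlunit A).
Proof. exact/convex_rel_graph/affine_snd. Qed.

Lemma convex_rrunit (A : calg) : convex_rel (@rrunit A).
Proof. exact/convex_rel_graph/affine_fst. Qed.

Lemma convex_rsym (A B : calg) : convex_rel (@rsym A B).
Proof. exact/convex_rel_graph/affine_pair/affine_fst/affine_snd. Qed.

Lemma convex_rcopy (A : calg) : convex_rel (@rcopy A).
Proof. exact/convex_rel_graph/affine_pair/affine_id/affine_id. Qed.

Lemma convex_rdelete (A : calg) : convex_rel (@rdelete A).
Proof. by []. Qed.

Lemma convex_rcap (A : calg) : convex_rel (@rcap A).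
Proof.
move=> I p Hp a b ab; rewrite /rcap act_ctens /=.
by congr (act (fsum Hp _)); apply: funext => i; apply: ab.
Qed.

(* [rel_solve] decides the equations between composites of these relations by
   splitting pairs and the unit point and supplying the evident witnesses. *)
Lemma ex_pair (X Y : Type) (P : X * Y -> Prop) :
  (exists x y, P (x, y)) -> exists z, P z.
Proof. by move=> [x [y Pxy]]; exists (x, y). Qed.

Lemma ex_tt (P : unit -> Prop) : P tt -> exists u, P u.
Proof. by exists tt. Qed.

Ltac rel_unfold :=
  unfold unitary, riso, req, rcup, rmerge, rnew, rcomp, rtens, rid, rconv,
    rassoc, rlunit, rrunit, rsym, rcap, rcopy, rdelete in *.

Ltac rel_destruct :=
  repeat (match goal with
    | H : exists _, _ |- _ => destruct H
    | H : _ /\ _ |- _ => destruct H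
    | H : True |- _ => clear H
    | x : ?T |- _ =>
        let T' := eval hnf in T in
        match T' with prod _ _ => destruct x | unit => destruct x end
    | H : (_, _) = (_, _) |- _ => injection H; clear H; intros
    | H : ?a = ?b |- _ => subst a || subst b
    end; simpl in * ).

Ltac rel_witness :=
  repeat (first [apply: ex_pair | apply: ex_tt | eexists | split]);
  simpl in *; try done; eauto.

Ltac rel_solve :=
  rel_unfold; repeat (intros; split); intros; rel_destruct; rel_witness.

Lemma convexRel_category : ConvexRel_category.
Proof.
split; first by move=> A _; exact: convex_rid.
split; first by move=> A B C Rl S _ _ _; exact: convex_rcomp.
by split=> *; [split|]; rel_solve.
Qed.

Lemma convexRel_symmetric_monoidal : ConvexRel_symmetric_monoidal.
Proof.
split; first exact: is_calg_cI.
split; first exact: is_calg_ctens.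
split; first by move=> *; exact: convex_rtens.
do 2 (split; first by move=> *; rel_solve).
split; first by move=> *; split; [exact: convex_rassoc | rel_solve].
split.
  move=> A _; split; first exact: convex_rlunit.
  by split; [rel_solve | split; [exact: convex_rrunit | rel_solve]].
split; first by move=> *; split; [exact: convex_rsym | rel_solve].
by do ![split]; move=> *; rel_solve.
Qed.

Lemma convexRel_dagger_symmetric_monoidal : ConvexRel_dagger_symmetric_monoidal.
Proof.
split; first by move=> *; exact: convex_rconv.
by do ![split]; move=> *; rel_solve.
Qed.

Lemma convexRel_dagger_compact_closed : ConvexRel_dagger_compact_closed.
Proof.
split; first exact: convexRel_category.
split; first exact: convexRel_symmetric_monoidal.
split; first exact: convexRel_dagger_symmetric_monoidal.
move=> A _; split; first exact: convex_rcap.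
split; first exact: (convex_rconv (@convex_rcap A)).
by rel_solve.
Qed.

Lemma convexRel_Frobenius : ConvexRel_Frobenius.
Proof.
move=> A _ /=.
split; first exact: convex_rcopy.
split; first exact: convex_rdelete.
split; first exact: (convex_rconv (@convex_rcopy A)).
split; first exact: (convex_rconv (@convex_rdelete A)).
by rel_solve.
Qed.

Theorem theorem1 : ConvexRel_dagger_compact_closed /\ ConvexRel_Frobenius.
Proof. exact: (conj convexRel_dagger_compact_closed convexRel_Frobenius). Qed.
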